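(* Let $X,Y\subseteq\Sigma^*$. If there exists $k\in\mathbb{N}$ such that for every $x\in X$ there exists $y\in Y$ with $\mathrm{ed}(x,y)<k$, and for every $y\in Y$ there exists $x\in X$ with $\mathrm{ed}(x,y)<k$, then $D(X,Y)=0$ for every $D\in\{\mathrm{AH}_{\mathrm{ned}},\mathrm{AH}_{\mathrm{ged}},\mathrm{AH}_{\mathrm{ced}}\}$.
   Context: $\Sigma$ is a finite alphabet. An edit path from $x$ to $y$ is a sequence $p=(a_1,b_1)\cdots(a_n,b_n)$ with $(a_i,b_i)\in(\Sigma\cup\{\varepsilon\})^2\setminus\{(\varepsilon,\varepsilon)\}$, $a_1\cdots a_n=x$, $b_1\cdots b_n=y$; $|p|=n$, $\mathrm{wgt}(p)=|\{i:a_i\ne b_i\}|$. $\mathrm{ed}(x,y)=\min_p\mathrm{wgt}(p)$ (Levenshtein distance); $\mathrm{ned}(x,y)=\min_p\mathrm{wgt}(p)/|p|$ ($\mathrm{ned}(\varepsilon,\varepsilon)=0$); $\mathrm{ged}(x,y)=\frac{2\mathrm{ed}(x,y)}{|x|+|y|+\mathrm{ed}(x,y)}$ ($0$ if $x=y=\varepsilon$); $\mathrm{ced}(x,y)$ is the minimum, over sequences $x=u_0,\dots,u_k=y$ with $\mathrm{ed}(u_{i-1},u_i)=1$, of $\sum_{i=1}^k1/\max(|u_{i-1}|,|u_i|)$. For a word distance $d$: $\overrightarrow{\mathrm{AH}}_{d}(X,Y)=\lim_{k\to\infty}\sup_{x\in X,|x|\ge k}\inf_{y\in Y}d(x,y)$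 (empty supremum $=0$) and $\mathrm{AH}_d(X,Y)=\max\{\overrightarrow{\mathrm{AH}}_{d}(X,Y),\overrightarrow{\mathrm{AH}}_{d}(Y,X)\}$. *)

From HB Require Import structures.
From mathcomp Require Import all_boot all_order all_algebra.
From mathcomp Require Import all_classical all_reals all_analysis.
Set Implicit Arguments. Unset Strict Implicit. Unset Printing Implicit Defensive.
Import Order.TTheory GRing.Theory Num.Theory.
Local Open Scope classical_set_scope.
Local Open Scope ring_scope.

Section EditDistances.
Variables (Sigma : finType) (R : realType).

Definition word := seq Sigma.

(* An edit operation (a,b) with a,b in Sigma \cup {eps}; None encodes eps. *)
Definition edit_op := (option Sigma * option Sigma)%type.

Definition opt_word (a : option Sigma) : word :=
  if a is Some c then [:: c] else [::].

Definition is_edit_path (x y : word) (p : seq edit_op) : Prop :=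
  all (fun ab => (ab.1 != None) || (ab.2 != None)) p /\
  flatten (map (fun ab => opt_word ab.1) p) = x /\
  flatten (map (fun ab => opt_word ab.2) p) = y.

Definition wgt (p : seq edit_op) : nat := count (fun ab => ab.1 != ab.2) p.

Definition ed (x y : word) : R :=
  inf [set (wgt p)%:R | p in is_edit_path x y].

Definition ned (x y : word) : R :=
  if (x == [::]) && (y == [::]) then 0
  else inf [set (wgt p)%:R / (size p)%:R | p in is_edit_path x y].

Definition ged (x y : word) : R :=
  if (x == [::]) && (y == [::]) then 0
  else 2 * ed x y / ((size x)%:R + (size y)%:R + ed x y).

(* x = u_0, u_1, ..., u_k = y with ed(u_{i-1},u_i) = 1; us = [u_1; ...; u_k] *)
Definition ed_chain (x y : word) (us : seq word) : Prop :=
  last x us = y /\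
  forall i, (i < size us)%N -> ed (nth x (x :: us) i) (nth x us i) = 1.

Definition chain_cost (x : word) (us : seq word) : R :=
  \sum_(i < size us)
    1 / (maxn (size (nth x (x :: us) i)) (size (nth x us i)))%:R.

Definition ced (x y : word) : R :=
  inf [set chain_cost x us | us in ed_chain x y].

Local Open Scope ereal_scope.

Definition AH_stage (d : word -> word -> R) (X Y : set word) (k : nat)
  : \bar R :=
  let S := [set ereal_inf [set (d x y)%:E | y in Y] | x in
             [set x | X x /\ (k <= size x)%N]] in
  if `[< S = set0 >] then 0 else ereal_sup S.

Definition AH_dir (d : word -> word -> R) (X Y : set word) : \bar R :=
  limn (AH_stage d X Y).

Definition AH (d : word -> word -> R) (X Y : set word) : \bar R :=
  Order.max (AH_dir d X Y) (AH_dir d Y X).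

End EditDistances.

From HB Require Import structures.
From mathcomp Require Import all_boot all_order all_algebra.
From mathcomp Require Import all_classical all_reals all_analysis.
From mathcomp Require Import zify.
Import Order.TTheory GRing.Theory Num.Theory.
Local Open Scope classical_set_scope.
Local Open Scope ring_scope.
Set Implicit Arguments. Unset Strict Implicit.

(* An edit path p from x to y of weight w < k has at least |x| operations, and
   performing its w non-identity operations one at a time turns x into y through
   words of length at least |x| - w.  Hence ned(x,y) <= w/|p| <= k/|x|,
   ged(x,y) <= 2w/|x| and ced(x,y) <= w/(|x| - w), all below 4k/(|x|+1) as soon
   as |x| > 2k.  So every long word of X is uniformly close to Y and, since ed is
   symmetric, every long word of Y to X: both directed asymptotic Hausdorff
   distances vanish. *)

Section EditPaths.
Variable Sigma : finType.
Local Notation word := (seq Sigma).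
Implicit Types (x y u v s t : word) (p q : seq (edit_op Sigma)).

Definition edit_src p : word := flatten [seq opt_word ab.1 | ab <- p].
Definition edit_tgt p : word := flatten [seq opt_word ab.2 | ab <- p].

Lemma edit_src_cons ab p : edit_src (ab :: p) = opt_word ab.1 ++ edit_src p.
Proof. by []. Qed.

Lemma edit_tgt_cons ab p : edit_tgt (ab :: p) = opt_word ab.2 ++ edit_tgt p.
Proof. by []. Qed.

Lemma is_edit_path_cons a b x y p : (a != None) || (b != None) ->
  is_edit_path x y p ->
  is_edit_path (opt_word a ++ x) (opt_word b ++ y) ((a, b) :: p).
Proof. by move=> ab [hp [<- <-]]; split; rewrite /= ?ab. Qed.

Lemma is_edit_path_cat x y x' y' p q :
  is_edit_path x y p -> is_edit_path x' y' q ->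
  is_edit_path (x ++ x') (y ++ y') (p ++ q).
Proof.
move=> [hp [<- <-]] [hq [<- <-]].
by split; [rewrite all_cat hp hq | rewrite !map_cat !flatten_cat].
Qed.

Definition copy_ops s : seq (edit_op Sigma) := [seq (Some c, Some c) | c <- s].

Lemma is_edit_path_copy s : is_edit_path s s (copy_ops s).
Proof. by elim: s => //= c s; apply: (@is_edit_path_cons (Some c) (Some c)). Qed.

Lemma wgt_copy s : wgt (copy_ops s) = 0%N.
Proof. by elim: s => //= c s; rewrite /wgt /= eqxx. Qed.

Lemma edit_path_exists x y : exists p, is_edit_path x y p.
Proof.
elim: x => [|c x [p hp]]; last first.
  by exists ((Some c, None) :: p); apply: (@is_edit_path_cons (Some c) None).
elim: y => [|c y [p hp]]; first by exists [::].
by exists ((None, Some c) :: p); apply: (@is_edit_path_cons None (Some c)).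
Qed.

Definition swap_op (ab : edit_op Sigma) : edit_op Sigma := (ab.2, ab.1).

Lemma is_edit_path_swap x y p :
  is_edit_path x y p -> is_edit_path y x (map swap_op p).
Proof.
move=> [hp [<- <-]]; split.
  by rewrite all_map; apply: sub_all hp => -[a b] /=; rewrite orbC.
by rewrite -!map_comp.
Qed.

Lemma wgt_swap p : wgt (map swap_op p) = wgt p.
Proof. by rewrite /wgt count_map; apply: eq_count => -[a b] /=; rewrite eq_sym. Qed.

Lemma size_edit_src p : (size (edit_src p) <= size p)%N.
Proof.
by elim: p => [|[[a|] b] p IH] //; rewrite edit_src_cons size_cat /=; lia.
Qed.

Lemma size_edit_src_le p : (size (edit_src p) <= size (edit_tgt p) + wgt p)%N.
Proof.
elim: p => [|[a b] p IH] //=.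
rewrite edit_src_cons edit_tgt_cons /wgt /= -/(wgt p) !size_cat.
by case: a b => [a|] [b|] //=; try case: (_ == _) => /=; lia.
Qed.

Lemma edit_src_eq_tgt p : wgt p = 0%N -> edit_src p = edit_tgt p.
Proof.
elim: p => [|[a b] p IH] //=; rewrite /wgt /=; case: eqP => //= -> /IH.
by rewrite edit_src_cons edit_tgt_cons => ->.
Qed.

Definition single_edit u v := exists s t (a b : option Sigma),
  [/\ a <> b, u = s ++ opt_word a ++ t & v = s ++ opt_word b ++ t].

Lemma single_edit_neq u v : single_edit u v -> u != v.
Proof.
case=> s [t [a [b [ab -> ->]]]]; apply/eqP => /(congr1 (drop (size s))).
rewrite !drop_size_cat //; case: a b ab => [a|] [b|] //= ab.
- by case=> eab; apply: ab; rewrite eab.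
- by move/(congr1 size) => /=; lia.
- by move/(congr1 size) => /=; lia.
Qed.

Lemma single_edit_catl s u v : single_edit u v -> single_edit (s ++ u) (s ++ v).
Proof.
by case=> s' [t [a [b [ab -> ->]]]]; exists (s ++ s'), t, a, b; rewrite !catA.
Qed.

Fixpoint edit_chain x (us : seq word) : Prop :=
  if us is u :: us' then single_edit x u /\ edit_chain u us' else True.

Lemma edit_chain_cat x us vs :
  edit_chain x us -> edit_chain (last x us) vs -> edit_chain x (us ++ vs).
Proof. by elim: us x => [|u us IH] x //= [xu uus] hvs; split => //; apply: IH. Qed.

Lemma edit_chain_catl s x us :
  edit_chain x us -> edit_chain (s ++ x) (map (cat s) us).
Proof.
elim: us x => [|u us IH] x //= [xu uus].
by split; [apply: single_edit_catl | apply: IH].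
Qed.

Lemma edit_chain_of_ops p : exists us,
  [/\ edit_chain (edit_src p) us, last (edit_src p) us = edit_tgt p,
      size us = wgt p & all (fun u => size (edit_src p) <= size u + wgt p)%N us].
Proof.
elim: p => [|[a b] p [us [hch hlast hsize hlong]]]; first by exists [::].
rewrite edit_src_cons edit_tgt_cons.
have -> : wgt ((a, b) :: p) = ((a != b) + wgt p)%N by [].
exists (map (cat (opt_word a)) us ++
        (if a != b then [:: opt_word b ++ edit_tgt p] else [::])).
split.
- apply: edit_chain_cat; first exact: edit_chain_catl.
  rewrite last_map hlast; case: eqP => //= ab; split => //.
  by exists [::], (edit_tgt p), a, b.
- by rewrite last_cat last_map hlast; case: eqP => [->|].
- by rewrite size_cat size_map hsize; case: (a != b) => /=; lia.
- rewrite all_cat; apply/andP; split.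
    apply/allP => _ /mapP [u uus ->]; move/allP: hlong => /(_ u uus).
    by rewrite !size_cat; case: (a != b) => /=; lia.
  case: eqP => //= _; rewrite andbT.
  have := size_edit_src_le ((a, b) :: p).
  rewrite edit_src_cons edit_tgt_cons /= !size_cat.
  by rewrite /wgt /=; case: eqP => //= _; lia.
Qed.

End EditPaths.

Lemma inf_ge0 (R : realType) (S : set R) : (forall r, S r -> 0 <= r) -> 0 <= inf S.
Proof.
move=> S_ge0; have [->|/set0P S0] := eqVneq S set0; first by rewrite inf0.
exact: lb_le_inf.
Qed.

Lemma ler_nat_div (R : numFieldType) (m n k l : nat) :
  (m * l <= n * k)%N -> (0 < k)%N -> (0 < l)%N -> m%:R / k%:R <= n%:R / l%:R :> R.
Proof.
move=> h k0 l0; rewrite ler_pdivrMr ?ltr0n // mulrAC ler_pdivlMr ?ltr0n //.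
by rewrite -!natrM ler_nat.
Qed.

Section EditDistances.
Variables (Sigma : finType) (R : realType).
Local Notation word := (seq Sigma).
Implicit Types (x y u v : word) (p : seq (edit_op Sigma)).

Lemma ed_ge0 x y : 0 <= ed R x y.
Proof. by apply: inf_ge0 => _ [p _ <-]. Qed.

Lemma ed_le_wgt x y p : is_edit_path x y p -> ed R x y <= (wgt p)%:R.
Proof. by move=> hp; apply: ge_inf; [exists 0 => _ [q _ <-] | exists p]. Qed.

Lemma ed_lt_nat x y (K : nat) :
  ed R x y < K%:R -> exists2 p, is_edit_path x y p & (wgt p < K)%N.
Proof.
have [p hp] := edit_path_exists x y.
move=> /inf_lt [|_ [q hq <-]]; first by exists (wgt p)%:R, p.
by rewrite ltr_nat; exists q.
Qed.

Lemma ed_sym x y : ed R x y = ed R y x.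
Proof.
suff ed_le_sym u v : ed R u v <= ed R v u by apply/eqP; rewrite eq_le !ed_le_sym.
have [p hp] := edit_path_exists v u.
apply: lb_le_inf; first by exists (wgt p)%:R, p.
by move=> _ [q hq <-]; rewrite -wgt_swap; apply/ed_le_wgt/is_edit_path_swap.
Qed.

Lemma ed_ge1 x y : x != y -> 1 <= ed R x y.
Proof.
have [p hp] := edit_path_exists x y.
move=> xy; apply: lb_le_inf; first by exists (wgt p)%:R, p.
move=> _ [q [_ [ex ey]] <-]; rewrite ler1n lt0n; apply: contra_neq xy.
by move/edit_src_eq_tgt; rewrite /edit_src /edit_tgt ex ey.
Qed.

Lemma single_edit_ed u v : single_edit u v -> ed R u v = 1.
Proof.
move=> uv; apply/eqP; rewrite eq_le ed_ge1 ?single_edit_neq // andbT.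
case: uv => s [t [a [b [ab -> ->]]]].
have ab' : (a != None) || (b != None) by case: a b ab => [a|] [b|].
have hp := is_edit_path_cat (is_edit_path_copy s)
             (is_edit_path_cons ab' (is_edit_path_copy t)).
apply: le_trans (ed_le_wgt hp) _.
by rewrite /wgt count_cat /= -!/(wgt _) !wgt_copy; case: eqP.
Qed.

Lemma edit_chain_ed_chain x us : edit_chain x us -> ed_chain R x (last x us) us.
Proof.
move=> hch; split=> //; elim: us x hch => [|u us IH] x //= [xu uus] [|i] /=.
  by move=> _; exact: single_edit_ed.
rewrite ltnS => ilt; have ilt' : (i < size (u :: us))%N by exact: leqW.
by rewrite (set_nth_default u x ilt) (set_nth_default u x ilt'); apply: IH.
Qed.

Lemma ned_ge0 x y : 0 <= ned R x y.
Proof. by rewrite /ned; case: ifP => // _; apply: inf_ge0 => _ [p _ <-]. Qed.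

Lemma ged_ge0 x y : 0 <= ged R x y.
Proof.
by rewrite /ged; case: ifP => // _; rewrite divr_ge0 ?mulr_ge0 ?addr_ge0 ?ed_ge0.
Qed.

Lemma ned_le_path x y p : x != [::] -> is_edit_path x y p ->
  ned R x y <= (wgt p)%:R / (size p)%:R.
Proof.
move=> /negPf x0 hp; rewrite /ned x0.
by apply: ge_inf; [exists 0 => _ [q _ <-]; apply: divr_ge0 | exists p].
Qed.

Lemma ged_le_ed x y : x != [::] -> ged R x y <= 2 * ed R x y / (size x)%:R.
Proof.
move=> x0; rewrite /ged (negPf x0).
have x_gt0 : 0 < (size x)%:R :> R by rewrite ltr0n lt0n size_eq0.
have le_den : (size x)%:R <= (size x)%:R + (size y)%:R + ed R x y.
  by rewrite -addrA lerDl addr_ge0 ?ed_ge0.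
apply: ler_wpM2l; first by rewrite mulr_ge0 ?ed_ge0.
by rewrite lef_pV2 ?posrE // (lt_le_trans x_gt0 le_den).
Qed.

Lemma chain_cost_ge0 x us : 0 <= chain_cost R x us.
Proof. by apply: sumr_ge0 => i _; apply: divr_ge0. Qed.

Lemma ced_ge0 x y : 0 <= ced R x y.
Proof. by apply: inf_ge0 => _ [us _ <-]; exact: chain_cost_ge0. Qed.

Lemma ced_le_chain_cost x y us : ed_chain R x y us -> ced R x y <= chain_cost R x us.
Proof.
move=> hus; apply: ge_inf; last by exists us.
by exists 0 => _ [vs _ <-]; exact: chain_cost_ge0.
Qed.

Lemma chain_cost_le x us m : (0 < m)%N -> all (fun u => m <= size u)%N us ->
  chain_cost R x us <= (size us)%:R / m%:R.
Proof.
move=> m0 /allP us_long; apply: le_trans (_ : \sum_(i < size us) 1 / m%:R <= _).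
  apply: ler_sum => i _.
  have m_le : (m <= maxn (size (nth x (x :: us) i)) (size (nth x us i)))%N.
    by rewrite (leq_trans _ (leq_maxr _ _)) // us_long // mem_nth.
  by apply: (@ler_nat_div R 1 1); rewrite ?mul1n // (leq_trans m0 m_le).
by rewrite sumr_const card_ord -mulrnAl.
Qed.

Lemma ced_le_path x y p : is_edit_path x y p -> (wgt p < size x)%N ->
  ced R x y <= (wgt p)%:R / (size x - wgt p)%:R.
Proof.
case=> _ [ex ey] w_lt; have [us [hch hlast hsize hlong]] := edit_chain_of_ops p.
rewrite -/(edit_src p) in ex; rewrite -/(edit_tgt p) in ey.
rewrite ex ey in hch hlast hlong.
have hc : ed_chain R x y us by rewrite -hlast; exact: edit_chain_ed_chain.
apply: le_trans (ced_le_chain_cost hc) _.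
rewrite -hsize; apply: chain_cost_le; first by rewrite subn_gt0 hsize.
by apply/allP => u /(allP hlong); rewrite leq_subLR hsize addnC.
Qed.

Definition decay (K n : nat) : R := (4 * K)%:R / n.+1%:R.

Lemma decay_ge0 K n : 0 <= decay K n.
Proof. exact: divr_ge0. Qed.

Lemma decay_cvg0 K : decay K n @[n --> \oo] --> 0.
Proof. by rewrite -(mulr0 (4 * K)%:R); apply: cvgMl_tmp; exact: cvg_harmonic. Qed.

Lemma le_decay K n m : (n <= m)%N -> decay K m <= decay K n.
Proof. by move=> nm; apply: ler_nat_div => //; nia. Qed.

Section NearPaths.
Variables (K : nat) (x y : word) (p : seq (edit_op Sigma)).
Hypotheses (hp : is_edit_path x y p) (w_lt : (wgt p < K)%N).
Hypothesis x_long : (2 * K < size x)%N.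

Let x_neq0 : x != [::].
Proof. by rewrite -size_eq0 -lt0n (leq_trans _ x_long). Qed.

Lemma ned_le_decay : ned R x y <= decay K (size x).
Proof.
have x_le : (size x <= size p)%N by case: hp => _ [<- _]; exact: size_edit_src.
by apply: le_trans (ned_le_path x_neq0 hp) _; apply: ler_nat_div => //; nia.
Qed.

Lemma ged_le_decay : ged R x y <= decay K (size x).
Proof.
apply: le_trans (ged_le_ed y x_neq0) _.
apply: le_trans (_ : (2 * wgt p)%:R / (size x)%:R <= _).
  apply: ler_wpM2r; first by rewrite invr_ge0.
  by rewrite natrM; apply: ler_wpM2l => //; exact: ed_le_wgt.
by apply: ler_nat_div => //; nia.
Qed.

Lemma ced_le_decay : ced R x y <= decay K (size x).
Proof.
apply: le_trans (ced_le_path hp _) _; first lia.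
by apply: ler_nat_div => //; nia.
Qed.

End NearPaths.

Local Open Scope ereal_scope.

Lemma AH_dir_eq0 (d : word -> word -> R) (X Y : set word) (b : R^nat) (N : nat) :
  (forall x y, (0 <= d x y)%R) -> (forall n, (0 <= b n)%R) -> b @ \oo --> 0%R ->
  (forall n x, (N <= n <= size x)%N -> X x -> exists2 y, Y y & (d x y <= b n)%R) ->
  AH_dir d X Y = 0.
Proof.
move=> d_ge0 b_ge0 b_cvg close; apply: cvg_lim => //.
apply: (@squeeze_cvge _ _ _ _ (fun=> 0) _ (fun n => (b n)%:E)); last first.
- by apply: cvg_EFin; [exact: nearW | exact: b_cvg].
- exact: cvg_cst.
exists N => // n /= Nn; rewrite /AH_stage.
set S := (X in `[< X = set0 >]).
have dist_ge0 x : 0 <= ereal_inf [set (d x y)%:E | y in Y].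
  by apply: le_ereal_inf_tmp => _ [y _ <-]; rewrite lee_fin.
case: asboolP => [_|/eqP/set0P [z Sz]]; first by rewrite lexx lee_fin b_ge0.
apply/andP; split.
  by apply: le_ereal_sup_tmp; exists z => //; case: Sz => x _ <-; exact: dist_ge0.
apply: ge_ereal_sup => _ [x [Xx xn] <-].
have Nxn : (N <= n <= size x)%N by rewrite Nn.
have [y Yy dxy] := close n x Nxn Xx.
by apply: ge_ereal_inf; exists (d x y)%:E; [exists y | rewrite lee_fin].
Qed.

Section EditBoundedDistance.
Variables (d : word -> word -> R) (K : nat).
Hypothesis d_ge0 : forall x y, (0 <= d x y)%R.
Hypothesis d_le : forall x y p, is_edit_path x y p -> (wgt p < K)%N ->
  (2 * K < size x)%N -> (d x y <= decay K (size x))%R.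

Lemma AH_dir_eq0_of_ed_lt (X Y : set word) :
  (forall x, X x -> exists y, Y y /\ (ed R x y < K%:R)%R) -> AH_dir d X Y = 0.
Proof.
move=> XY; apply: (@AH_dir_eq0 _ _ _ (decay K) (2 * K).+1) => //.
- exact: decay_ge0.
- exact: decay_cvg0.
move=> n x /andP[Kn nx] Xx; have [y [Yy /ed_lt_nat [p hp w_lt]]] := XY x Xx.
exists y => //; exact: le_trans (d_le hp w_lt (leq_trans Kn nx)) (le_decay _ nx).
Qed.

Lemma AH_eq0_of_ed_lt (X Y : set word) :
  (forall x, X x -> exists y, Y y /\ (ed R x y < K%:R)%R) ->
  (forall y, Y y -> exists x, X x /\ (ed R x y < K%:R)%R) ->
  AH d X Y = 0.
Proof.
move=> XY YX; rewrite /AH !AH_dir_eq0_of_ed_lt ?maxxx //.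
by move=> y /YX [x [Xx xy]]; exists x; rewrite ed_sym.
Qed.

End EditBoundedDistance.

End EditDistances.

Theorem mainTheorem8 (Sigma : finType) (R : realType)
    (X Y : set (seq Sigma)) :
  (exists k : nat,
     (forall x, X x -> exists y, Y y /\ ed R x y < k%:R) /\
     (forall y, Y y -> exists x, X x /\ ed R x y < k%:R)) ->
  AH (ned R) X Y = 0%E /\ AH (ged R) X Y = 0%E /\ AH (ced R) X Y = 0%E.
Proof.
move=> [K [XY YX]]; split; [|split].
- exact (AH_eq0_of_ed_lt (@ned_ge0 Sigma R) (@ned_le_decay Sigma R K) XY YX).
- exact (AH_eq0_of_ed_lt (@ged_ge0 Sigma R) (@ged_le_decay Sigma R K) XY YX).
- exact (AH_eq0_of_ed_lt (@ced_ge0 Sigma R) (@ced_le_decay Sigma R K) XY YX).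
Qed.
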